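(* Let $N$ be a positive even integer, $\alpha,\beta$ real with $(1-\alpha/2)_k\neq0$ for $k\le N/2$, and put $\eta=\tfrac12-\tfrac{\alpha+\beta}{4}$, $\tau=2N+2-\alpha-\beta$. Let $P_n$ be the monic dual $-1$ Hahn polynomials defined in the context. Then, as polynomial identities in $x$: for $0\le n\le N/2$, $$P_{2n}(x-1)=16^n(-N/2)_n(1-\alpha/2)_n\;{}_3F_2\!\left(\begin{matrix}-n,\ \eta+\tfrac x4,\ \eta-\tfrac x4\\ -\tfrac N2,\ 1-\tfrac\alpha2\end{matrix};1\right),$$ and for $0\le n\le N/2-1$, $$P_{2n+1}(x-1)=16^n(1-N/2)_n(1-\alpha/2)_n\,(x-\tau)\;{}_3F_2\!\left(\begin{matrix}-n,\ \eta+\tfrac x4,\ \eta-\tfrac x4\\ 1-\tfrac N2,\ 1-\tfrac\alpha2\end{matrix};1\right).$$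
   Context: $(c)_k=c(c+1)\cdots(c+k-1)$, $(c)_0=1$, and ${}_3F_2\!\left(\begin{matrix}-n,a_2,a_3\\ b_1,b_2\end{matrix};1\right)=\sum_{k=0}^n\frac{(-n)_k(a_2)_k(a_3)_k}{(b_1)_k(b_2)_k\,k!}$. For $N$ even and $\sigma=\alpha+\beta$: $b_n^{(-1)}=2N+1-\sigma$ for $n$ even, $b_n^{(-1)}=-2N-3+\sigma$ for $n$ odd; $u_n^{(-1)}=4n(\alpha-n)$ for $n$ even, $u_n^{(-1)}=4(N-n+1)(n+\beta-N-1)$ for $n$ odd. The monic dual $-1$ Hahn polynomials are defined by $P_{-1}=0$, $P_0=1$, $P_{n+1}(x)=(x-b_n^{(-1)})P_n(x)-u_n^{(-1)}P_{n-1}(x)$ for $n\ge0$. *)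

From HB Require Import structures.
From mathcomp Require Import all_boot all_order all_algebra.
Set Implicit Arguments. Unset Strict Implicit. Unset Printing Implicit Defensive.
Import Order.TTheory GRing.Theory Num.Theory.
Local Open Scope ring_scope.

Definition poch (R : ringType) (c : R) (k : nat) : R :=
  \prod_(i < k) (c + i%:R).

Definition hyp3F2 (R : fieldType) (n : nat) (a2 a3 b1 b2 : R) : R :=
  \sum_(k < n.+1)
    (poch (- n%:R) k * poch a2 k * poch a3 k)
      / (poch b1 k * poch b2 k * (k`!)%:R).

Definition bm1 (R : ringType) (N : nat) (alpha beta : R) (n : nat) : R :=
  if odd n then - 2 * N%:R - 3 + (alpha + beta)
  else 2 * N%:R + 1 - (alpha + beta).

Definition um1 (R : ringType) (N : nat) (alpha beta : R) (n : nat) : R :=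
  if odd n then 4 * (N%:R - n%:R + 1) * (n%:R + beta - N%:R - 1)
  else 4 * n%:R * (alpha - n%:R).

(* pair (P_{n-1}, P_n) with P_{-1} = 0, P_0 = 1 *)
Fixpoint dHahn_pair (R : ringType) (N : nat) (alpha beta : R) (n : nat)
  : {poly R} * {poly R} :=
  match n with
  | 0 => (0, 1)
  | n'.+1 =>
      let: (pm, p) := dHahn_pair N alpha beta n' in
      (p, ('X - (bm1 N alpha beta n')%:P) * p - (um1 N alpha beta n')%:P * pm)
  end.

Definition dHahn (R : ringType) (N : nat) (alpha beta : R) (n : nat) : {poly R} :=
  (dHahn_pair N alpha beta n).2.

From HB Require Import structures.
From mathcomp Require Import all_boot all_order all_algebra.
From mathcomp Require Import ring.
Set Implicit Arguments. Unset Strict Implicit. Unset Printing Implicit Defensive.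
Import Order.TTheory GRing.Theory Num.Theory.
Local Open Scope ring_scope.

(* Put c = 1 - alpha/2, z = (x/4)^2 and note that the numerator parameters
   eta + x/4, eta - x/4 of the 3F2 only enter through
     (eta + x/4)_k (eta - x/4)_k = prod_(i<k) ((eta + i)^2 - z).
   Clearing the denominators (-M)_k (c)_k k! of the 3F2 against the prefactor
   16^n (-M)_n (c)_n turns the right-hand sides into division-free sums
     E_n = sum_k 16^n (-1)^k C(n,k) [prod_(k<=i<n) (i-M)(c+i)]   Q_k(z),
     O_n = sum_k 16^n (-1)^k C(n,k) [prod_(k<=i<n) (i+1-M)(c+i)] Q_k(z),
   over an arbitrary commutative ring.  The heart of the proof is a pair of
   contiguous relations between E and O (section [ContiguousSums]), which
   say exactly that (E_n, (x - tau) O_n) obeys the three-term recurrence of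
   (P_2n, P_2n+1) evaluated at x - 1.  An induction on n identifies the
   polynomials with these sums ([dHahn_sums]), and the Pochhammer lemmas
   below convert the sums back into the 3F2 form of the statement. *)

(* An equation L = Rr follows from a = b once L - Rr is a multiple of a - b;
   this lets [ring] verify identities that hold modulo a known relation. *)
Lemma eq_by_diff1 (R : comNzRingType) (L Rr a b f : R) :
  L - Rr = f * (a - b) -> a = b -> L = Rr.
Proof. by move=> hdiff hab; apply/eqP; rewrite -subr_eq0 hdiff hab subrr mulr0. Qed.

Lemma eq_by_diff2 (R : comNzRingType) (L Rr a1 b1 a2 b2 f1 f2 : R) :
  L - Rr = f1 * (a1 - b1) + f2 * (a2 - b2) -> a1 = b1 -> a2 = b2 -> L = Rr.
Proof.
by move=> hdiff h1 h2; apply/eqP; rewrite -subr_eq0 hdiff h1 h2 !subrr !mulr0 addr0.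
Qed.

Lemma pochS (R : nzRingType) (b : R) k : poch b k.+1 = poch b k * (b + k%:R).
Proof. by rewrite /poch big_ord_recr. Qed.

Lemma poch_split (R : nzRingType) (b : R) k n : (k <= n)%N ->
  poch b n = poch b k * \prod_(k <= i < n) (b + i%:R).
Proof.
move=> lekn; rewrite /poch -!(big_mkord xpredT (fun i => b + i%:R)).
by rewrite (big_cat_nat (leq0n k) lekn).
Qed.

Lemma poch_neg_nat (R : comNzRingType) n k :
  poch (- n%:R : R) k = (-1) ^+ k * ('C(n, k) * k`!)%:R.
Proof.
elim: k => [|k IH]; first by rewrite /poch big_ord0 expr0 bin0 mul1r.
rewrite pochS IH; case: (leqP k n) => hk.
  have absorb := mul_bin_left n k.
  rewrite factS mulnCA (mulnA k.+1) absorb exprS !natrM natrB //; ring.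
rewrite !bin_small ?(ltnW hk) // ?mul0n ?mulr0 ?mul0r //.
exact: leq_trans hk _.
Qed.

Lemma poch_neq0 (R : fieldType) (b : R) k :
  (forall i, (i < k)%N -> b + i%:R != 0) -> poch b k != 0.
Proof. by move=> hb; apply/prodf_neq0 => i _; apply: hb. Qed.

Lemma poch_conj_pair (R : fieldType) (eta x : R) k :
  poch (eta + x / 4) k * poch (eta - x / 4) k =
  \prod_(0 <= i < k) ((eta + i%:R) ^+ 2 - (x / 4) ^+ 2).
Proof.
rewrite /poch -big_split big_mkord /=; apply: eq_bigr => i _.
by rewrite -[LHS]/((eta + x / 4 + i%:R) * (eta - x / 4 + i%:R)); ring.
Qed.

Section ContiguousSums.
Variable R : comNzRingType.
Variables (M : nat) (c eta z : R).

Definition zprod k : R := \prod_(0 <= i < k) ((eta + i%:R) ^+ 2 - z).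
Definition mprod k n : R := \prod_(k <= i < n) (i%:R - M%:R).
Definition mprod1 k n : R := \prod_(k <= i < n) (i.+1%:R - M%:R).
Definition cprod k n : R := \prod_(k <= i < n) (c + i%:R).

Definition ecoef n k : R :=
  16 ^+ n * (-1) ^+ k * 'C(n, k)%:R * (mprod k n * cprod k n).
Definition ocoef n k : R :=
  16 ^+ n * (-1) ^+ k * 'C(n, k)%:R * (mprod1 k n * cprod k n).

Definition Esum n := \sum_(0 <= k < n.+1) ecoef n k * zprod k.
Definition Osum n := \sum_(0 <= k < n.+1) ocoef n k * zprod k.

Lemma zprodS k : zprod k.+1 = zprod k * ((eta + k%:R) ^+ 2 - z).
Proof. by rewrite /zprod big_nat_recr. Qed.

Lemma mprodSr k n : (k <= n)%N -> mprod k n.+1 = mprod k n * (n%:R - M%:R).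
Proof. by move=> lekn; rewrite /mprod big_nat_recr. Qed.
Lemma mprodSl k n : (k <= n)%N -> mprod k n.+1 = (k%:R - M%:R) * mprod1 k n.
Proof. by move=> lekn; rewrite /mprod big_nat_recl. Qed.
Lemma mprod1Sr k n : (k <= n)%N -> mprod1 k n.+1 = mprod1 k n * (n.+1%:R - M%:R).
Proof. by move=> lekn; rewrite /mprod1 big_nat_recr. Qed.
Lemma mprod1_ltn k n : (k < n)%N -> mprod1 k n = (k.+1%:R - M%:R) * mprod1 k.+1 n.
Proof. by move=> ltkn; rewrite /mprod1 big_ltn. Qed.
Lemma cprodSr k n : (k <= n)%N -> cprod k n.+1 = cprod k n * (c + n%:R).
Proof. by move=> lekn; rewrite /cprod big_nat_recr. Qed.
Lemma cprod_ltn k n : (k < n)%N -> cprod k n = (c + k%:R) * cprod k.+1 n.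
Proof. by move=> ltkn; rewrite /cprod big_ltn. Qed.

Lemma ecoef_small n k : (n < k)%N -> ecoef n k = 0.
Proof. by move=> ltnk; rewrite /ecoef bin_small // mulr0 mul0r. Qed.
Lemma ocoef_small n k : (n < k)%N -> ocoef n k = 0.
Proof. by move=> ltnk; rewrite /ocoef bin_small // mulr0 mul0r. Qed.
Lemma ecoef_diag n : ecoef n n = 16 ^+ n * (-1) ^+ n.
Proof. by rewrite /ecoef binn /mprod /cprod !big_geq // !mulr1. Qed.
Lemma ocoef_diag n : ocoef n n = 16 ^+ n * (-1) ^+ n.
Proof. by rewrite /ocoef binn /mprod1 /cprod !big_geq // !mulr1. Qed.

Lemma Esum_ext n : Esum n = \sum_(0 <= k < n.+2) ecoef n k * zprod k.
Proof. by rewrite /Esum (big_nat_recr n.+1) //= ecoef_small // mul0r addr0. Qed.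
Lemma Osum_ext n : Osum n = \sum_(0 <= k < n.+2) ocoef n k * zprod k.
Proof. by rewrite /Osum (big_nat_recr n.+1) //= ocoef_small // mul0r addr0. Qed.

(* First contiguous relation, coefficientwise: O_(n+1) - E_(n+1) is a
   multiple of O_n, by absorption of binomial coefficients. *)
Lemma ocoefS n k : (k <= n.+1)%N ->
  ocoef n.+1 k = ecoef n.+1 k + 16 * n.+1%:R * (c + n%:R) * ocoef n k.
Proof.
rewrite leq_eqVlt => /orP [/eqP -> | ].
  by rewrite ocoef_diag ecoef_diag ocoef_small // mulr0 addr0.
rewrite ltnS => lekn.
rewrite /ocoef /ecoef mprod1Sr // mprodSl // cprodSr //.
have absorb : (n.+1%:R - k%:R) * 'C(n.+1, k)%:R = n.+1%:R * 'C(n, k)%:R :> R.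
  by rewrite -natrB ?(leq_trans lekn) // -!natrM -mul_bin_down.
apply: (@eq_by_diff1 _ _ _ _ _
  (16 * 16 ^+ n * (-1) ^+ k * cprod k n * mprod1 k n * (c + n%:R)) _ absorb).
rewrite exprS; ring.
Qed.

Lemma Osum_rec n : Osum n.+1 = Esum n.+1 + 16 * n.+1%:R * (c + n%:R) * Osum n.
Proof.
rewrite [Osum n]Osum_ext /Osum /Esum mulr_sumr -big_split /=.
apply: eq_big_nat => k /andP [_ hk].
by rewrite ocoefS // mulrDl mulrA.
Qed.

(* Second contiguous relation.  [ocoef_pred n k] is the coefficient of Q_k
   in the shifted sum sum_k ocoef n k Q_(k+1); [eshift n] collects the linear
   factor produced when comparing E_(n+1) with E_n. *)
Definition ocoef_pred n k : R := if k is k'.+1 then ocoef n k' else 0.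
Definition eshift n : R := n%:R + c - 2 * eta - M%:R.

(* Multiplying O_n by z - (eta + M)^2 shifts Q_k to Q_(k+1). *)
Lemma Osum_mulz n : (z - (eta + M%:R) ^+ 2) * Osum n =
  \sum_(0 <= k < n.+2)
     (ocoef n k * ((k%:R - M%:R) * (2 * eta + k%:R + M%:R)) - ocoef_pred n k) * zprod k.
Proof.
rewrite (eq_bigr (fun k => ocoef n k * ((k%:R - M%:R) * (2 * eta + k%:R + M%:R))
   * zprod k - ocoef_pred n k * zprod k)) => [|k _]; last by rewrite mulrBl.
rewrite sumrB (big_nat_recr n.+1) //= ocoef_small // !mul0r addr0.
rewrite (big_nat_recl n.+1) //= mul0r add0r.
rewrite /Osum mulr_sumr -sumrB; apply: eq_big_nat => k _.
rewrite zprodS; ring.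
Qed.

Lemma ecoefS n k : (k <= n.+1)%N ->
  ecoef n.+1 k = 16 * ((k%:R - M%:R) * (2 * eta + k%:R + M%:R)) * ocoef n k
    - 16 * ocoef_pred n k - 16 * (M%:R - n%:R) * eshift n * ecoef n k.
Proof.
rewrite leq_eqVlt => /orP [/eqP -> | ].
  rewrite /= ecoef_diag ocoef_diag ocoef_small // ecoef_small // !exprS; ring.
rewrite ltnS => lekn.
have mprod_shift : mprod k n * (n%:R - M%:R) = (k%:R - M%:R) * mprod1 k n.
  by rewrite -mprodSr // mprodSl.
case: k lekn mprod_shift => [|k] lekn mprod_shift.
  rewrite /= /ecoef /ocoef mprodSl // cprodSr // !bin0 !expr0.
  apply: (@eq_by_diff1 _ _ _ _ _ (- (16 * 16 ^+ n * cprod 0 n * eshift n)) _ mprod_shift).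
  rewrite /eshift exprS; ring.
rewrite /ocoef_pred /ecoef /ocoef mprodSl // cprodSr // binS.
rewrite (mprod1_ltn lekn) (cprod_ltn lekn).
have absorb : k.+1%:R * 'C(n, k.+1)%:R = (n%:R - k%:R) * 'C(n, k)%:R :> R.
  by rewrite -natrB ?(ltnW lekn) // -!natrM mul_bin_left.
apply: (@eq_by_diff2 _ _ _ _ _ _ _
   (16 * 16 ^+ n * (-1) ^+ k * cprod k.+1 n * eshift n * 'C(n, k.+1)%:R)
   (16 * 16 ^+ n * (-1) ^+ k * cprod k.+1 n * (k.+1%:R - M%:R) * mprod1 k.+1 n)
   _ mprod_shift absorb).
rewrite /eshift !exprS; ring.
Qed.

Lemma Esum_rec n : Esum n.+1 = 16 * (z - (eta + M%:R) ^+ 2) * Osum n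
   - 16 * (M%:R - n%:R) * eshift n * Esum n.
Proof.
rewrite -mulrA Osum_mulz [Esum n]Esum_ext /Esum !mulr_sumr -sumrB.
apply: eq_big_nat => k /andP [_ hk].
rewrite ecoefS //; ring.
Qed.

End ContiguousSums.

Lemma dHahnSS (R : nzRingType) N (alpha beta : R) n :
  dHahn N alpha beta n.+2 =
    ('X - (bm1 N alpha beta n.+1)%:P) * dHahn N alpha beta n.+1
     - (um1 N alpha beta n.+1)%:P * dHahn N alpha beta n.
Proof. by rewrite /dHahn /=; case: (dHahn_pair N alpha beta n). Qed.

Lemma natr_even (R : nzRingType) N : ~~ odd N -> N%:R = 2 * (N./2)%:R :> R.
Proof.
by move=> evN; rewrite -[in LHS](odd_double_half N) (negbTE evN) add0n -mul2n natrM.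
Qed.

Lemma dHahn_sums (R : numFieldType) N (alpha beta x : R) : ~~ odd N ->
  let c := 1 - alpha / 2 in let eta := 1 / 2 - (alpha + beta) / 4 in
  forall n,
  (dHahn N alpha beta (2 * n)).[x - 1] = Esum N./2 c eta ((x / 4) ^+ 2) n /\
  (dHahn N alpha beta (2 * n).+1).[x - 1] =
     (x - (2 * N%:R + 2 - alpha - beta)) * Osum N./2 c eta ((x / 4) ^+ 2) n.
Proof.
move=> evN c eta; have NE := natr_even R evN.
elim=> [|n [IHe IHo]].
  rewrite /Osum /Esum !big_nat1 ecoef_diag ocoef_diag /zprod big_geq // !expr0.
  rewrite /dHahn /= /bm1 /um1 /=.
  by rewrite !(hornerD, hornerN, hornerM, hornerC, hornerX); split; ring.
have even_succ : (2 * n.+1 = (2 * n).+2)%N by rewrite mulnS.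
have heven : (dHahn N alpha beta (2 * n.+1)).[x - 1] =
             Esum N./2 c eta ((x / 4) ^+ 2) n.+1.
  rewrite even_succ dHahnSS !(hornerD, hornerN, hornerM, hornerC, hornerX) IHe IHo.
  by rewrite Esum_rec /bm1 /um1 /eshift /= oddM /= NE /c /eta; field.
split=> //.
rewrite even_succ dHahnSS -even_succ !(hornerD, hornerN, hornerM, hornerC, hornerX).
by rewrite heven IHo Osum_rec /bm1 /um1 oddM /= NE /c /eta; field.
Qed.

Lemma Esum_hyp3F2 (R : numFieldType) (M n : nat) (c eta x : R) : (n <= M)%N ->
  (forall k, (k <= M)%N -> poch c k != 0) ->
  Esum M c eta ((x / 4) ^+ 2) n =
  16 ^+ n * poch (- M%:R) n * poch c n *
    hyp3F2 n (eta + x / 4) (eta - x / 4) (- M%:R) c.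
Proof.
move=> lenM hc.
rewrite /Esum /hyp3F2 big_mkord mulr_sumr; apply: eq_bigr => [[k]] /=.
rewrite ltnS => lekn _; have lekM := leq_trans lekn lenM.
have nzM : poch (- M%:R : R) k != 0.
  apply: poch_neq0 => i ltik; rewrite addrC subr_eq0 eqr_nat ltn_eqF //.
  exact: leq_trans ltik lekM.
have nzc := hc k lekM.
have nzf : (k`!)%:R != 0 :> R by rewrite pnatr_eq0 -lt0n fact_gt0.
rewrite (poch_split (- M%:R) lekn) (poch_split c lekn) (poch_neg_nat R n k).
rewrite -!mulrA [poch (eta + _) k * _]mulrA poch_conj_pair.
rewrite (eq_bigr (fun i => i%:R - M%:R) (fun i _ => addrC _ _)).
rewrite /ecoef /mprod /cprod /zprod natrM; field.
by rewrite nzM nzc nzf.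
Qed.

Lemma Osum_hyp3F2 (R : numFieldType) (M n : nat) (c eta x : R) : (n < M)%N ->
  (forall k, (k <= M)%N -> poch c k != 0) ->
  Osum M c eta ((x / 4) ^+ 2) n =
  16 ^+ n * poch (1 - M%:R) n * poch c n *
    hyp3F2 n (eta + x / 4) (eta - x / 4) (1 - M%:R) c.
Proof.
move=> ltnM hc.
rewrite /Osum /hyp3F2 big_mkord mulr_sumr; apply: eq_bigr => [[k]] /=.
rewrite ltnS => lekn _; have ltkM := leq_ltn_trans lekn ltnM.
have nzM : poch (1 - M%:R : R) k != 0.
  apply: poch_neq0 => i ltik.
  rewrite (_ : 1 - M%:R + i%:R = i.+1%:R - M%:R); last by ring.
  by rewrite subr_eq0 eqr_nat ltn_eqF // (leq_ltn_trans ltik).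
have nzc := hc k (ltnW ltkM).
have nzf : (k`!)%:R != 0 :> R by rewrite pnatr_eq0 -lt0n fact_gt0.
rewrite (poch_split (1 - M%:R) lekn) (poch_split c lekn) (poch_neg_nat R n k).
rewrite -!mulrA [poch (eta + _) k * _]mulrA poch_conj_pair.
rewrite (eq_bigr (fun i => i.+1%:R - M%:R)) => [|i _]; last by ring.
rewrite /ocoef /mprod1 /cprod /zprod natrM; field.
by rewrite nzM nzc nzf.
Qed.

Theorem mainTheorem5 (R : realFieldType) (N : nat) (alpha beta : R) :
  (0 < N)%N -> ~~ odd N ->
  (forall k : nat, (k <= N./2)%N -> poch (1 - alpha / 2) k != 0) ->
  let eta := 1 / 2 - (alpha + beta) / 4 in
  let tau := 2 * N%:R + 2 - alpha - beta in
  (forall n : nat, (n <= N./2)%N -> forall x : R,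
     (dHahn N alpha beta (2 * n)%N).[x - 1] =
       16 ^+ n * poch (- (N%:R / 2)) n * poch (1 - alpha / 2) n *
       hyp3F2 n (eta + x / 4) (eta - x / 4) (- (N%:R / 2)) (1 - alpha / 2))
  /\
  (forall n : nat, (n.+1 <= N./2)%N -> forall x : R,
     (dHahn N alpha beta (2 * n).+1).[x - 1] =
       16 ^+ n * poch (1 - N%:R / 2) n * poch (1 - alpha / 2) n * (x - tau) *
       hyp3F2 n (eta + x / 4) (eta - x / 4) (1 - N%:R / 2) (1 - alpha / 2)).
Proof.
move=> _ evN hc eta tau.
have halfN : N%:R / 2 = (N./2)%:R :> R by rewrite (natr_even R evN); field.
rewrite halfN; split=> n hn x; have [Peven Podd] := dHahn_sums alpha beta x evN n.
  by rewrite Peven Esum_hyp3F2.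
by rewrite Podd Osum_hyp3F2 // /tau; ring.
Qed.
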